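(* Let $p(z)=z^n+a_nz^{n-1}+\cdots+a_2z+a_1$ be a complex monic polynomial with $n\geq2$ and $a_1\neq0$, with Frobenius companion matrix $C_p$. Then $$\|C_p^4\|\leq\sqrt{\frac{1}{2}\left(\delta_1+\delta+\sqrt{(\delta_1-\delta)^2+4\delta_2}\right)+1}.$$
   Context: The Frobenius companion matrix of $p$ is the $n\times n$ matrix $C_p$ whose first row is $(-a_n,-a_{n-1},\dots,-a_2,-a_1)$, whose entries $(k+1,k)$ equal $1$ for $k=1,\dots,n-1$, and whose other entries are $0$. Define numbers $b_j,c_j,d_j$ ($j=1,\dots,n$) by: the first row of $C_p^2$ is $(b_n,b_{n-1},\dots,b_1)$, the first row of $C_p^3$ is $(c_n,\dots,c_1)$, the first row of $C_p^4$ is $(d_n,\dots,d_1)$ (so $b_j=a_na_j-a_{j-1}$, $c_j=-a_nb_j+a_{n-1}a_j-a_{j-2}$ with $a_0=a_{-1}=0$). Set $\alpha=\sum_{j=1}^n|a_j|^2$, $\beta=\sum_{j=1}^n|b_j|^2$, $\gamma=-\sum_{j=1}^n b_j\overline{a_j}$, $\delta=\frac{1}{2}\left(\alpha+\beta+\sqrt{(\alpha-\beta)^2+4|\gamma|^2}\right)$; $\alpha_1=\sum_{j=1}^n|d_j|^2$, $\beta_1=\sum_{j=1}^n|c_j|^2$, $\gamma_1=\sum_{j=1}^n d_j\overline{c_j}$, $\delta_1=\frac12\left(\alpha_1+\beta_1+\sqrt{(\alpha_1-\beta_1)^2+4|\gamma_1|^2}\right)$; $\gamma_2=\sum_{j=1}^n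 d_j\overline{b_j}$, $\gamma_3=\sum_{j=1}^n d_j\overline{a_j}$, $\gamma_4=\sum_{j=1}^n c_j\overline{b_j}$, $\gamma_5=\sum_{j=1}^n c_j\overline{a_j}$, and $\delta_2=\frac12\Big(|\gamma_2|^2+|\gamma_3|^2+|\gamma_4|^2+|\gamma_5|^2+\sqrt{\big((|\gamma_2|^2+|\gamma_3|^2)-(|\gamma_4|^2+|\gamma_5|^2)\big)^2+4|\gamma_2\overline{\gamma_4}+\gamma_3\overline{\gamma_5}|^2}\Big)$. $\|\cdot\|$ is the spectral (operator) norm. *)

From HB Require Import structures.
From mathcomp Require Import all_boot all_order all_algebra.
From mathcomp Require Import complex.
From mathcomp Require Import boolp classical_sets reals.

Set Implicit Arguments.
Unset Strict Implicit.
Unset Printing Implicit Defensive.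

Import Order.TTheory GRing.Theory Num.Theory.
Local Open Scope ring_scope.
Local Open Scope classical_set_scope.

Section Defs.
Variable R : realType.
Local Notation C := R[i].

Definition sqmod (z : C) : R := complex.Re z ^+ 2 + complex.Im z ^+ 2.

Definition cconj (z : C) : C := conjc z.

Definition vnorm n (v : 'cV[C]_n) : R := Num.sqrt (\sum_(i < n) sqmod (v i 0)).

Definition opnorm n (A : 'M[C]_n) : R :=
  sup [set r : R | exists v : 'cV[C]_n, vnorm v = 1 /\ r = vnorm (A *m v)].

(* Frobenius companion matrix of z^n + a_n z^(n-1) + ... + a_2 z + a_1,
   coefficients given by a : nat -> C (only a 1, ..., a n are used).
   0-based: first row entry j is -a_(n-j); entries (j+1, j) equal 1. *)
Definition companion (n : nat) (a : nat -> C) : 'M[C]_n :=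
  \matrix_(i < n, j < n)
    if (i == 0 :> nat) then - a (n - j)%N
    else if (i == j.+1 :> nat) then 1 else 0.

Definition mxe n (A : 'M[C]_n) (i j : nat) : C :=
  if @insub nat (fun k => k < n)%N _ i is Some i' then
    if @insub nat (fun k => k < n)%N _ j is Some j' then A i' j' else 0
  else 0.

Section Quantities.
Variables (n : nat) (a : nat -> C).
Let Cp := companion n a.
(* first row of C_p^k is (x_n, ..., x_1): x_j = (C_p^k)_{1, n-j+1} (1-based) *)
Definition bco (j : nat) : C := mxe (Cp ^+ 2) 0 (n - j).
Definition cco (j : nat) : C := mxe (Cp ^+ 3) 0 (n - j).
Definition dco (j : nat) : C := mxe (Cp ^+ 4) 0 (n - j).

Definition alpha : R := \sum_(1 <= j < n.+1) sqmod (a j).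
Definition beta : R := \sum_(1 <= j < n.+1) sqmod (bco j).
Definition gamma : C := - \sum_(1 <= j < n.+1) bco j * cconj (a j).
Definition delta : R :=
  (alpha + beta + Num.sqrt ((alpha - beta) ^+ 2 + 4 * sqmod gamma)) / 2.

Definition alpha1 : R := \sum_(1 <= j < n.+1) sqmod (dco j).
Definition beta1 : R := \sum_(1 <= j < n.+1) sqmod (cco j).
Definition gamma1 : C := \sum_(1 <= j < n.+1) dco j * cconj (cco j).
Definition delta1 : R :=
  (alpha1 + beta1 + Num.sqrt ((alpha1 - beta1) ^+ 2 + 4 * sqmod gamma1)) / 2.

Definition gamma2 : C := \sum_(1 <= j < n.+1) dco j * cconj (bco j).
Definition gamma3 : C := \sum_(1 <= j < n.+1) dco j * cconj (a j).
Definition gamma4 : C := \sum_(1 <= j < n.+1) cco j * cconj (bco j).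
Definition gamma5 : C := \sum_(1 <= j < n.+1) cco j * cconj (a j).
Definition delta2 : R :=
  (sqmod gamma2 + sqmod gamma3 + sqmod gamma4 + sqmod gamma5 +
   Num.sqrt (((sqmod gamma2 + sqmod gamma3) - (sqmod gamma4 + sqmod gamma5)) ^+ 2
             + 4 * sqmod (gamma2 * cconj gamma4 + gamma3 * cconj gamma5))) / 2.
End Quantities.
End Defs.

From HB Require Import structures.
From mathcomp Require Import all_boot all_order all_algebra.
From mathcomp Require Import complex.
From mathcomp Require Import boolp classical_sets reals.
From mathcomp Require Import ring lra zify.
Import Order.TTheory GRing.Theory Num.Theory.
Local Open Scope ring_scope.

(* The first four entries of [C_p^4 v] are the products [x_k = r_k . v] of [v]
   with the first rows [r_4, r_3, r_2, r_1] of [C_p^4, ..., C_p], the others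
   are entries of [v] shifted down; so [|C_p^4 v|^2 <= sum_k |x_k|^2 + 1] for a
   unit vector [v].  The sum is at most the largest eigenvalue of the Gram
   matrix of the [r_k].  Cut into 2x2 blocks, its diagonal blocks have largest
   eigenvalues [delta1] and [delta], its off-diagonal block has squared norm at
   most [delta2], and such a block matrix has largest eigenvalue at most that
   of [[delta1, c], [c^*, delta]] with [|c|^2 = delta2]. *)

Section LargestEigenvalue.
Context {R : rcfType}.
Implicit Types A B G P Q u : R.

(* [lmax A B `|g|^2] is the largest eigenvalue of the Hermitian matrix
   [[A, g], [g^*, B]]; the paper's delta, delta1, delta2 are of this form. *)
Definition lmax A B G := (A + B + Num.sqrt ((A - B) ^+ 2 + 4 * G)) / 2.

Lemma lmaxC A B G : lmax A B G = lmax B A G.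
Proof. by rewrite /lmax (addrC A B) -(sqrrN (A - B)) opprB. Qed.

Lemma lmax_ge0 A B G : 0 <= A -> 0 <= B -> 0 <= lmax A B G.
Proof. by move=> A0 B0; rewrite divr_ge0 // !addr_ge0 ?sqrtr_ge0. Qed.

Lemma ler_sqrt_sqr u (X : R) : u ^+ 2 <= X -> u <= Num.sqrt X.
Proof. by move=> uX; rewrite (le_trans (ler_norm u)) // -sqrtr_sqr ler_wsqrtr. Qed.

(* Writing [lmax A B G * (P + Q) - A * P - B * Q = a * P + b * Q] with
   [a, b >= 0] and [a * b = G], the claim is AM-GM for [a * P] and [b * Q]. *)
Lemma lmax_quad {A B G P Q u} : 0 <= G -> 0 <= P -> 0 <= Q ->
  u <= Num.sqrt (P * Q * G) -> A * P + B * Q + 2 * u <= lmax A B G * (P + Q).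
Proof.
move=> G0 P0 Q0 hu; set s := Num.sqrt ((A - B) ^+ 2 + 4 * G).
have s0 : 0 <= s := sqrtr_ge0 _.
have s2 : s ^+ 2 = (A - B) ^+ 2 + 4 * G.
  by rewrite sqr_sqrtr // addr_ge0 ?sqr_ge0 ?mulr_ge0.
set a := (s - (A - B)) / 2; set b := (s + (A - B)) / 2.
have a0 : 0 <= a by rewrite divr_ge0 //; nra.
have b0 : 0 <= b by rewrite divr_ge0 //; nra.
have ab : a * b = G by rewrite /a /b; nra.
have -> : lmax A B G * (P + Q) = A * P + B * Q + (a * P + b * Q).
  by rewrite /lmax /a /b -/s; field.
set w := Num.sqrt (P * Q * G) in hu.
have w0 : 0 <= w := sqrtr_ge0 _.
have w2 : w ^+ 2 = P * Q * G by rewrite sqr_sqrtr // !mulr_ge0.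
have amgm : (2 * w) ^+ 2 <= (a * P + b * Q) ^+ 2.
  have := sqr_ge0 (a * P - b * Q); rewrite -ab in w2; nra.
have : 2 * w <= a * P + b * Q.
  have : 0 <= a * P + b * Q by apply: addr_ge0; apply: mulr_ge0.
  nra.
lra.
Qed.

End LargestEigenvalue.

Section ComplexFacts.
Context {R : realType}.
Local Notation C := R[i].
Local Notation re := (@complex.Re R).
Local Notation im := (@complex.Im R).
Implicit Types x y z g : C.

Lemma reD x y : re (x + y) = re x + re y. Proof. by case: x; case: y. Qed.
Lemma imD x y : im (x + y) = im x + im y. Proof. by case: x; case: y. Qed.
Lemma reN x : re (- x) = - re x. Proof. by case: x. Qed.
Lemma imN x : im (- x) = - im x. Proof. by case: x. Qed.
Lemma reM x y : re (x * y) = re x * re y - im x * im y.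
Proof. by case: x; case: y. Qed.
Lemma imM x y : im (x * y) = re x * im y + im x * re y.
Proof. by case: x => ? ?; case: y => ? ? /=; ring. Qed.
Lemma reJ x : re (conjc x) = re x. Proof. by case: x. Qed.
Lemma imJ x : im (conjc x) = - im x. Proof. by case: x. Qed.

Lemma conjcD x y : conjc (x + y) = conjc x + conjc y. Proof. exact: rmorphD. Qed.
Lemma conjcM x y : conjc (x * y) = conjc x * conjc y. Proof. exact: rmorphM. Qed.
Lemma conjcN x : conjc (- x) = - conjc x. Proof. exact: rmorphN. Qed.

Definition reimE := (reD, imD, reN, imN, reM, imM, reJ, imJ).

Lemma re_sum (I : Type) (r : seq I) (P : pred I) (F : I -> C) :
  re (\sum_(i <- r | P i) F i) = \sum_(i <- r | P i) re (F i).
Proof. exact: (big_morph _ reD). Qed.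

Lemma sqmod_ge0 z : 0 <= sqmod z.
Proof. by rewrite addr_ge0 ?sqr_ge0. Qed.

Lemma sqmodJ z : sqmod (conjc z) = sqmod z.
Proof. by rewrite /sqmod reJ imJ sqrrN. Qed.

Lemma sqmodN z : sqmod (- z) = sqmod z.
Proof. by rewrite /sqmod reN imN !sqrrN. Qed.

Lemma sqmodM x y : sqmod (x * y) = sqmod x * sqmod y.
Proof. by rewrite /sqmod !reimE; ring. Qed.

Lemma sqmod_reJ z : sqmod z = re (z * conjc z).
Proof. by rewrite /sqmod !reimE; ring. Qed.

Lemma sqmodD x y : sqmod (x + y) = sqmod x + sqmod y + 2 * re (x * conjc y).
Proof. by rewrite /sqmod !reimE; ring. Qed.

Lemma re_mulJ_le (t : R) x y : 2 * t * re (x * conjc y) <= sqmod x + t ^+ 2 * sqmod y.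
Proof.
have := sqr_ge0 (re x - t * re y); have := sqr_ge0 (im x - t * im y).
rewrite /sqmod !reimE; nra.
Qed.

Lemma re_le_sqrt_sqmod z : re z <= Num.sqrt (sqmod z).
Proof. by apply: ler_sqrt_sqr; rewrite lerDl sqr_ge0. Qed.

Lemma hermitian2_le (A B : R) g x y :
  A * sqmod x + B * sqmod y + 2 * re (conjc x * y * g)
  <= lmax A B (sqmod g) * (sqmod x + sqmod y).
Proof.
apply: lmax_quad; rewrite ?sqmod_ge0 // -sqmodJ -!sqmodM.
exact: re_le_sqrt_sqmod.
Qed.

(* Cauchy-Schwarz in C^2 = R^4, via Lagrange's identity. *)
Lemma re_dot2_le x1 x2 y1 y2 :
  re (conjc x1 * y1 + conjc x2 * y2)
  <= Num.sqrt ((sqmod x1 + sqmod x2) * (sqmod y1 + sqmod y2)).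
Proof.
apply: ler_sqrt_sqr; rewrite -subr_ge0.
rewrite /sqmod !reimE.
set e := (X in 0 <= X).
have -> : e = (re x1 * re y2 - re x2 * re y1) ^+ 2 + (re x1 * im y2 - im x2 * re y1) ^+ 2
   + (im x1 * re y2 - re x2 * im y1) ^+ 2 + (im x1 * im y2 - im x2 * im y1) ^+ 2
   + (re x1 * im y1 - im x1 * re y1) ^+ 2 + (re x2 * im y2 - im x2 * re y2) ^+ 2.
  by rewrite /e; ring.
by rewrite !addr_ge0 ?sqr_ge0.
Qed.

End ComplexFacts.

Section InnerProduct.
Context {R : realType} (n : nat).
Local Notation C := R[i].
Local Notation re := (@complex.Re R).
Implicit Types (f g h U : nat -> C) (c x y : C).

Definition dotp f g : C := \sum_(j < n) f j * conjc (g j).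
Definition sqnorm f : R := \sum_(j < n) sqmod (f j).

Lemma dotpDl f g h : dotp (fun j => f j + g j) h = dotp f h + dotp g h.
Proof. by rewrite /dotp -big_split; apply: eq_bigr => j _; rewrite mulrDl. Qed.

Lemma dotpZl c f g : dotp (fun j => c * f j) g = c * dotp f g.
Proof. by rewrite /dotp mulr_sumr; apply: eq_bigr => j _; rewrite mulrA. Qed.

Lemma dotpC f g : dotp g f = conjc (dotp f g).
Proof.
rewrite /dotp (big_morph _ (@conjcD R) (conjc0 R)); apply: eq_bigr => j _.
by rewrite conjcM conjcK mulrC.
Qed.

Lemma dotpDr f g h : dotp f (fun j => g j + h j) = dotp f g + dotp f h.
Proof. by rewrite dotpC dotpDl conjcD -!dotpC. Qed.

Lemma dotpZr c f g : dotp f (fun j => c * g j) = conjc c * dotp f g.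
Proof. by rewrite dotpC dotpZl conjcM -dotpC. Qed.

Lemma sqnorm_ge0 f : 0 <= sqnorm f.
Proof. by apply: sumr_ge0 => j _; apply: sqmod_ge0. Qed.

Lemma sqnormD f g :
  sqnorm (fun j => f j + g j) = sqnorm f + sqnorm g + 2 * re (dotp f g).
Proof.
rewrite /sqnorm /dotp re_sum mulr_sumr -!big_split.
by apply: eq_bigr => j _; apply: sqmodD.
Qed.

Lemma sqnormZ c f : sqnorm (fun j => c * f j) = sqmod c * sqnorm f.
Proof. by rewrite /sqnorm mulr_sumr; apply: eq_bigr => j _; apply: sqmodM. Qed.

Lemma re_dotp_sqr_le f g : sqnorm g = 1 -> re (dotp f g) ^+ 2 <= sqnorm f.
Proof.
move=> g1; have amgm t : 2 * t * re (dotp f g) <= sqnorm f + t ^+ 2 * sqnorm g.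
  rewrite /dotp re_sum /sqnorm !mulr_sumr -big_split ler_sum // => j _.
  exact: re_mulJ_le.
by have := amgm (re (dotp f g)); rewrite g1; nra.
Qed.

Lemma sqnorm_comb2_le x y f g :
  sqnorm (fun j => conjc x * f j + conjc y * g j)
  <= lmax (sqnorm f) (sqnorm g) (sqmod (dotp f g)) * (sqmod x + sqmod y).
Proof.
rewrite sqnormD !sqnormZ dotpZl dotpZr conjcK !sqmodJ mulrA.
by rewrite (mulrC (sqmod x)) (mulrC (sqmod y)); apply: hermitian2_le.
Qed.

(* The cross term is [re <z, (x3, x4)>] for [z := G^* (x1, x2)], [G] the
   matrix of the [dotp fi gj], and [|z|^2] is a Hermitian form in [(x1, x2)]. *)
Lemma re_dotp_comb2_le x1 x2 x3 x4 f1 f2 g1 g2 :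
  re (dotp (fun j => conjc x1 * f1 j + conjc x2 * f2 j)
           (fun j => conjc x3 * g1 j + conjc x4 * g2 j))
  <= Num.sqrt ((sqmod x1 + sqmod x2) * (sqmod x3 + sqmod x4) *
       lmax (sqmod (dotp f1 g1) + sqmod (dotp f1 g2))
            (sqmod (dotp f2 g1) + sqmod (dotp f2 g2))
            (sqmod (dotp f1 g1 * conjc (dotp f2 g1)
                    + dotp f1 g2 * conjc (dotp f2 g2)))).
Proof.
set d2 := lmax _ _ _.
set z1 := x1 * conjc (dotp f1 g1) + x2 * conjc (dotp f2 g1).
set z2 := x1 * conjc (dotp f1 g2) + x2 * conjc (dotp f2 g2).
have -> : dotp (fun j => conjc x1 * f1 j + conjc x2 * f2 j)
               (fun j => conjc x3 * g1 j + conjc x4 * g2 j)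
          = conjc z1 * x3 + conjc z2 * x4.
  rewrite dotpDl !dotpDr !dotpZl !dotpZr !conjcK /z1 /z2.
  by rewrite !(conjcD, conjcM) !conjcK; ring.
have hz : sqmod z1 + sqmod z2 <= d2 * (sqmod x1 + sqmod x2).
  apply: le_trans _ (hermitian2_le _ _ _ _ _); rewrite le_eqVlt; apply/predU1P; left.
  by rewrite /z1 /z2 /sqmod !reimE; ring.
apply: le_trans (re_dot2_le _ _ _ _) _; apply: ler_wsqrtr.
rewrite mulrAC; apply: ler_wpM2r; first by rewrite addr_ge0 ?sqmod_ge0.
by rewrite mulrC.
Qed.

Definition gram4_bound f1 f2 f3 f4 : R :=
  lmax (lmax (sqnorm f1) (sqnorm f2) (sqmod (dotp f1 f2)))
       (lmax (sqnorm f3) (sqnorm f4) (sqmod (dotp f3 f4)))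
       (lmax (sqmod (dotp f1 f3) + sqmod (dotp f1 f4))
             (sqmod (dotp f2 f3) + sqmod (dotp f2 f4))
             (sqmod (dotp f1 f3 * conjc (dotp f2 f3)
                     + dotp f1 f4 * conjc (dotp f2 f4)))).

Lemma gram4_bound_ge0 f1 f2 f3 f4 : 0 <= gram4_bound f1 f2 f3 f4.
Proof. by rewrite !lmax_ge0 ?addr_ge0 ?sqnorm_ge0 ?sqmod_ge0. Qed.

Lemma sqnorm_comb4_le x1 x2 x3 x4 f1 f2 f3 f4 :
  sqnorm (fun j => (conjc x1 * f1 j + conjc x2 * f2 j)
                   + (conjc x3 * f3 j + conjc x4 * f4 j))
  <= gram4_bound f1 f2 f3 f4 * ((sqmod x1 + sqmod x2) + (sqmod x3 + sqmod x4)).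
Proof.
have hP := addr_ge0 (sqmod_ge0 x1) (sqmod_ge0 x2).
have hQ := addr_ge0 (sqmod_ge0 x3) (sqmod_ge0 x4).
rewrite sqnormD; apply: le_trans _ (lmax_quad _ hP hQ (re_dotp_comb2_le _ _ _ _ _ _ _ _)).
  by rewrite lerD2r lerD ?sqnorm_comb2_le.
by apply: lmax_ge0; apply: addr_ge0; apply: sqmod_ge0.
Qed.

(* Duality: with [w := \sum_k (dotp f_k U)^* f_k], the left-hand side [S]
   equals [re (dotp w U)], so [S ^+ 2 <= sqnorm w <= gram4_bound * S]. *)
Lemma sum_sqmod_dotp_le f1 f2 f3 f4 U : sqnorm U = 1 ->
  (sqmod (dotp f1 U) + sqmod (dotp f2 U)) + (sqmod (dotp f3 U) + sqmod (dotp f4 U))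
  <= gram4_bound f1 f2 f3 f4.
Proof.
move=> U1; set S := (X in X <= _).
have S0 : 0 <= S by apply: addr_ge0; apply: addr_ge0; apply: sqmod_ge0.
have hw := sqnorm_comb4_le (dotp f1 U) (dotp f2 U) (dotp f3 U) (dotp f4 U) f1 f2 f3 f4.
set w := (fun j => _) in hw.
have wU : re (dotp w U) = S.
  rewrite /w !dotpDl !dotpZl /S !sqmod_reJ !reD.
  by rewrite !(mulrC (conjc _)).
have S2 : S ^+ 2 <= sqnorm w by rewrite -wU; apply: re_dotp_sqr_le.
have := gram4_bound_ge0 f1 f2 f3 f4; rewrite -/S in hw; nra.
Qed.

End InnerProduct.

Local Open Scope classical_set_scope.

Lemma opnorm_le {R : realType} n (A : 'M[R[i]]_n) (M : R) : 0 <= M ->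
  (forall v, vnorm v = 1 -> vnorm (A *m v) <= M) -> opnorm A <= M.
Proof.
move=> M0 hA; rewrite /opnorm.
set E := [set r : R | exists v : 'cV_n, vnorm v = 1 /\ r = vnorm (A *m v)].
have [->|/set0P nE] := eqVneq E set0; first by rewrite sup0.
by apply: ge_sup nE _ => _ [v [v1 ->]]; apply: hA.
Qed.

Lemma sum_sub_rev {V : zmodType} (F : nat -> V) m :
  \sum_(1 <= j < m.+1) F (m - j)%N = \sum_(j < m) F j.
Proof.
rewrite big_add1 /= -(big_mkord xpredT) big_nat_rev /=.
by apply: eq_big_nat => i /andP[_ hi]; congr F; lia.
Qed.

Section CompanionMatrix.
Context {R : realType} (n : nat) (a : nat -> R[i]).
Local Notation C := R[i].
Local Notation Cp := (companion n a).

Definition cve (v : 'cV[C]_n) (i : nat) : C :=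
  if @insub nat (fun k => (k < n)%N) _ i is Some i' then v i' 0 else 0.

Definition first_row k : nat -> C := mxe (Cp ^+ k) 0.

Lemma cve_nat (v : 'cV[C]_n) i (hi : (i < n)%N) : cve v i = v (Ordinal hi) 0.
Proof. by rewrite /cve insubT. Qed.

Lemma cveE (v : 'cV[C]_n) (i : 'I_n) : cve v i = v i 0.
Proof. by case: i => i hi; rewrite cve_nat. Qed.

Lemma mxe_nat (A : 'M[C]_n) i j (hi : (i < n)%N) (hj : (j < n)%N) :
  mxe A i j = A (Ordinal hi) (Ordinal hj).
Proof. by rewrite /mxe !insubT. Qed.

Lemma vnormE (v : 'cV[C]_n) : vnorm v = Num.sqrt (sqnorm n (cve v)).
Proof. by congr Num.sqrt; apply: eq_bigr => i _; rewrite cveE. Qed.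

Lemma cve_companion_mul (v : 'cV[C]_n) i : (0 < i < n)%N ->
  cve (Cp *m v) i = cve v i.-1.
Proof.
case/andP=> i0 hi; have hi' : (i.-1 < n)%N by lia.
rewrite !cve_nat mxE (bigD1 (Ordinal hi')) //= big1 => [|j /eqP hj].
  by rewrite mxE /= (negbTE (lt0n_neq0 i0)) prednK // eqxx mul1r addr0.
rewrite mxE /= (negbTE (lt0n_neq0 i0)); case: eqP => [ij|]; last by rewrite mul0r.
by case: hj; apply: val_inj => /=; lia.
Qed.

Lemma cve_companion_pow k (v : 'cV[C]_n) i : (i < n)%N ->
  cve (Cp ^+ k *m v) i =
  if (i < k)%N then cve (Cp ^+ (k - i) *m v) 0 else cve v (i - k).
Proof.
elim: k i => [|k IH] [|i] hi //=; rewrite ?expr0 ?mul1mx ?subn0 //.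
by rewrite exprS -mulmxE -mulmxA cve_companion_mul ?IH //; lia.
Qed.

Lemma cve_pow_dotp k (v : 'cV[C]_n) : (0 < n)%N ->
  cve (Cp ^+ k *m v) 0 = dotp n (first_row k) (fun j => conjc (cve v j)).
Proof.
move=> n0; rewrite cve_nat mxE; apply: eq_bigr => -[j hj] _.
by rewrite /first_row conjcK cveE (mxe_nat _ _ _ n0 hj).
Qed.

(* The first [k] entries of [Cp ^+ k *m v] are the first entries of the
   [Cp ^+ m *m v], [1 <= m <= k]; the others are entries of [v] shifted down. *)
Lemma sqnorm_companion_pow_le k (v : 'cV[C]_n) : (0 < n)%N ->
  sqnorm n (cve (Cp ^+ k *m v))
  <= \sum_(1 <= m < k.+1) sqmod (dotp n (first_row m) (fun j => conjc (cve v j)))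
     + sqnorm n (cve v).
Proof.
move=> n0; under eq_big_nat => m _ do rewrite -cve_pow_dotp //.
pose g i := sqmod (if (i < k)%N then cve (Cp ^+ (k - i) *m v) 0 else cve v (i - k)).
have -> : sqnorm n (cve (Cp ^+ k *m v)) = \sum_(0 <= i < n) g i.
  by rewrite big_mkord; apply: eq_bigr => -[i hi] _; rewrite cve_companion_pow.
have -> : \sum_(1 <= m < k.+1) sqmod (cve (Cp ^+ m *m v) 0) + sqnorm n (cve v)
          = \sum_(0 <= i < k + n) g i.
  rewrite [RHS](@big_cat_nat _ _ _ k) ?leq_addr //=; congr (_ + _).
    rewrite big_add1 [RHS]big_nat_rev /=; apply: eq_big_nat => i /andP[_ ik].
    by rewrite /g add0n ifT ?subKn //; lia.
  rewrite -{1}[k]add0n big_addn addKn big_mkord; apply: eq_bigr => i _.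
  by rewrite /g ltnNge leq_addl /= addnK.
rewrite (@big_cat_nat _ _ _ n 0 (k + n)) ?leq_addl //= lerDl.
by apply: sumr_ge0 => i _; apply: sqmod_ge0.
Qed.

End CompanionMatrix.
Arguments cve {R n}.

Section PaperQuantities.
Context {R : realType} (n : nat) (a : nat -> R[i]).
Local Notation C := R[i].
Local Notation first_row := (first_row n a).

Lemma coef_first_row1 j : (0 < j <= n)%N -> a j = - first_row 1 (n - j).
Proof.
case/andP=> j0 jn; have hl : (n - j < n)%N by lia.
rewrite /first_row expr1 (mxe_nat _ _ _ _ (leq_ltn_trans (leq0n _) hl) hl) mxE /=.
by rewrite subKn // opprK.
Qed.

Lemma sum_coef_rev {V : zmodType} (F : nat -> C -> V) :
  \sum_(1 <= j < n.+1) F (n - j)%N (a j) = \sum_(j < n) F j (- first_row 1 j).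
Proof.
rewrite -(sum_sub_rev (fun l => F l (- first_row 1 l))).
by apply: eq_big_nat => j hj; rewrite coef_first_row1.
Qed.

Lemma gram4_bound_first_row :
  gram4_bound n (first_row 4) (first_row 3) (first_row 2) (first_row 1)
  = lmax (delta1 n a) (delta n a) (delta2 n a).
Proof.
have eA : alpha n a = sqnorm n (first_row 1).
  rewrite /alpha (sum_coef_rev (fun _ z => sqmod z)).
  by apply: eq_bigr => j _; rewrite sqmodN.
have eB : beta n a = sqnorm n (first_row 2).
  exact: (sum_sub_rev (fun l => sqmod (first_row 2 l)) n).
have eG : gamma n a = dotp n (first_row 2) (first_row 1).
  rewrite /gamma (sum_coef_rev (fun l z => first_row 2 l * conjc z)) -sumrN.
  by apply: eq_bigr => j _; rewrite conjcN mulrN opprK.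
have eA1 : alpha1 n a = sqnorm n (first_row 4).
  exact: (sum_sub_rev (fun l => sqmod (first_row 4 l)) n).
have eB1 : beta1 n a = sqnorm n (first_row 3).
  exact: (sum_sub_rev (fun l => sqmod (first_row 3 l)) n).
have eG1 : gamma1 n a = dotp n (first_row 4) (first_row 3).
  exact: (sum_sub_rev (fun l => first_row 4 l * conjc (first_row 3 l)) n).
have eG2 : gamma2 n a = dotp n (first_row 4) (first_row 2).
  exact: (sum_sub_rev (fun l => first_row 4 l * conjc (first_row 2 l)) n).
have eG4 : gamma4 n a = dotp n (first_row 3) (first_row 2).
  exact: (sum_sub_rev (fun l => first_row 3 l * conjc (first_row 2 l)) n).
have eG3 : gamma3 n a = - dotp n (first_row 4) (first_row 1).
  rewrite /gamma3 (sum_coef_rev (fun l z => first_row 4 l * conjc z)) -sumrN.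
  by apply: eq_bigr => j _; rewrite conjcN mulrN.
have eG5 : gamma5 n a = - dotp n (first_row 3) (first_row 1).
  rewrite /gamma5 (sum_coef_rev (fun l z => first_row 3 l * conjc z)) -sumrN.
  by apply: eq_bigr => j _; rewrite conjcN mulrN.
rewrite /delta1 /delta /delta2 eA eB eG eA1 eB1 eG1 eG2 eG3 eG4 eG5 /cconj.
move: first_row => r; rewrite /gram4_bound (lmaxC (sqnorm n (r 2%N))).
by rewrite !sqmodN conjcN mulrNN -(addrA (sqmod (dotp n (r 4%N) (r 2%N)) + _)).
Qed.

End PaperQuantities.

Theorem mainTheorem11 (R : realType) (n : nat) (a : nat -> R[i])
  (hn : (2 <= n)%N) (ha1 : a 1%N != 0) :
  opnorm (companion n a ^+ 4) <=
  Num.sqrt ((delta1 n a + delta n a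
             + Num.sqrt ((delta1 n a - delta n a) ^+ 2 + 4 * delta2 n a)) / 2 + 1).
Proof.
have n0 : (0 < n)%N by apply: leq_trans hn.
rewrite -[(delta1 n a + _ + _) / 2]/(lmax (delta1 n a) (delta n a) (delta2 n a)).
rewrite -gram4_bound_first_row; apply: opnorm_le => [|v v1]; first exact: sqrtr_ge0.
have v1' : sqnorm n (cve v) = 1.
  by rewrite -(expr1n _ 2) -v1 vnormE sqr_sqrtr ?sqnorm_ge0.
rewrite vnormE ler_sqrt ?addr_ge0 ?gram4_bound_ge0 //.
apply: le_trans (sqnorm_companion_pow_le _ _ 4 v n0) _.
have U1 : sqnorm n (fun j => conjc (cve v j)) = 1.
  by rewrite -v1'; apply: eq_bigr => j _; rewrite sqmodJ.
rewrite v1' lerD2r; move: (first_row n a) (fun j => conjc (cve v j)) U1 => r U U1.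
rewrite big_nat_recl // big_nat_recl // big_nat_recl // big_nat1.
have := sum_sqmod_dotp_le n (r 4%N) (r 3%N) (r 2%N) (r 1%N) U U1.
lra.
Qed.
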